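(* Let $\mathbf{X}$ be a signal satisfying $\mathbf{X}=\mathbf{D}_1\boldsymbol{\Gamma}_1$, $\boldsymbol{\Gamma}_1=\mathbf{D}_2\boldsymbol{\Gamma}_2,\dots,\boldsymbol{\Gamma}_{K-1}=\mathbf{D}_K\boldsymbol{\Gamma}_K$, where $\{\mathbf{D}_i\}_{i=1}^K$ are convolutional dictionaries with mutual coherences $\mu(\mathbf{D}_i)$. Suppose that for all $1\le i\le K$, $$\|\boldsymbol{\Gamma}_i\|_{0,\infty}^{s}<\tfrac12\Big(1+\tfrac{1}{\mu(\mathbf{D}_i)}\Big),$$ and that the thresholds $\lambda_i$ satisfy $\|\boldsymbol{\Gamma}_i\|_{0,\infty}^{s}\le \lambda_i<\tfrac12\big(1+\tfrac{1}{\mu(\mathbf{D}_i)}\big)$ for all $1\le i\le K$. Then $\{\boldsymbol{\Gamma}_i\}_{i=1}^K$ is the unique solution of the problem $\mathrm{DCP}_{\boldsymbol\lambda}$ for $\mathbf{X}$.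
   Context: Setting (ML-CSC model). Signals are one-dimensional of length $N$ with periodic (cyclic) boundary conditions. Set $m_0=1$ and $\boldsymbol{\Gamma}_0=\mathbf{X}\in\mathbb{R}^N$. For $i\ge1$, $\boldsymbol{\Gamma}_i\in\mathbb{R}^{Nm_i}$ is indexed so that entry $k m_i+r$ ($0\le k<N$, $0\le r<m_i$) is the coefficient of filter $r$ at spatial shift $k$. The dictionary $\mathbf{D}_i\in\mathbb{R}^{Nm_{i-1}\times Nm_i}$ is a (stride) convolutional dictionary: it has $m_i$ local filters of length $n_{i-1}m_{i-1}$, and its column indexed $km_i+r$ is filter $r$ placed (cyclically) on entries $km_{i-1},\dots,km_{i-1}+n_{i-1}m_{i-1}-1$ of an $\mathbb{R}^{Nm_{i-1}}$ vector and zero elsewhere (for $i=1$ this is an ordinary convolutional dictionary with filters of length $n_0$). All columns (atoms) have unit $\ell_2$ norm. The mutual coherence is $\mu(\mathbf{D})=\max_{i\ne j}|\mathbf{d}_i^T\mathbf{d}_j|$ over distinct columns. Stripes: for $i\ge1$, the $j$-th stripe $\mathbf{S}_{i,j}\boldsymbol{\Gamma}_i$ is the subvector of $\boldsymbol{\Gamma}_i$ of length $(2n_{i-1}-1)m_i$ consisting of the coefficients at spatial shifts $k\in\{j-n_{i-1}+1,\dots,j+n_{i-1}-1\}$ (mod $N$), all channels, i.e. the coefficients of all atoms of $\mathbf{D}_i$ overlapping the $j$-th length-$n_{i-1}m_{i-1}$ patch of $\boldsymbol{\Gamma}_{i-1}$. Define $\|\boldsymbol{\Gamma}_i\|_{0,\infty}^{s}=\max_j\|\mathbf{S}_{i,j}\boldsymbol{\Gamma}_i\|_0$.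 Deep coding problem $\mathrm{DCP}_{\boldsymbol\lambda}$: given $\mathbf{X}$, $\{\mathbf{D}_i\}$ and $\boldsymbol\lambda=(\lambda_1,\dots,\lambda_K)$, find $\{\boldsymbol{\Gamma}_i\}_{i=1}^K$ such that $\boldsymbol{\Gamma}_{i-1}=\mathbf{D}_i\boldsymbol{\Gamma}_i$ and $\|\boldsymbol{\Gamma}_i\|_{0,\infty}^{s}\le\lambda_i$ for all $1\le i\le K$ (with $\boldsymbol{\Gamma}_0=\mathbf{X}$). *)

From HB Require Import structures.
From mathcomp Require Import all_boot all_order all_algebra.
Set Implicit Arguments. Unset Strict Implicit. Unset Printing Implicit Defensive.
Import Order.TTheory GRing.Theory Num.Theory.
Local Open Scope ring_scope.

(* Stride convolutional dictionary D in R^{(N*mp) x (N*mi)} built from mi local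
   filters of length np*mp: filter r is the function j |-> f r j (j < np*mp).
   Column c = k*mi + r is filter r placed cyclically on entries
   k*mp, ..., k*mp + np*mp - 1, zero elsewhere (assumes np <= N). *)
Definition convdict (R : nzRingType) (N mp mi np : nat) (f : nat -> nat -> R)
  : 'M[R]_(N * mp, N * mi) :=
  \matrix_(p < N * mp, c < N * mi)
    (let k := (c %/ mi)%N in
     let r := (c %% mi)%N in
     let off := ((p + N * mp - k * mp) %% (N * mp))%N in
     if (off < np * mp)%N then f r off else 0).

Definition unit_atoms (R : nzRingType) (a b : nat) (D : 'M[R]_(a, b)) : Prop :=
  forall c : 'I_b, \sum_(p < a) D p c ^+ 2 = 1.

Definition coherence (R : realDomainType) (a b : nat) (D : 'M[R]_(a, b)) : R :=
  \big[Num.max/0]_(i < b) \big[Num.max/0]_(j < b | j != i)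
     `|\sum_(p < a) D p i * D p j|.

(* ||S_{j} g||_0 : number of nonzeros of the j-th stripe, i.e. of the
   coefficients at spatial shifts j-np+1, ..., j+np-1 (mod N), all mi channels
   (entry k*mi + r is filter r at shift k). *)
Definition stripe_l0 (R : nzRingType) (N mi np : nat) (g : 'cV[R]_(N * mi)) (j : nat)
  : nat :=
  \sum_(t < (2 * np).-1)
     \sum_(c < N * mi | (c %/ mi == (j + t + N + 1 - np) %% N)%N) (g c ord0 != 0)%R.

Definition stripe_norm (R : nzRingType) (N mi np : nat) (g : 'cV[R]_(N * mi)) : nat :=
  \max_(j < N) stripe_l0 np g j.

(* The bound  x < (1 + 1/mu)/2  with the convention 1/0 = +infinity,
   written without division: mu * (2x - 1) < 1  (equivalent for mu > 0,
   and always true for mu = 0). *)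
Definition below_coh_bound (R : realDomainType) (mu x : R) : Prop :=
  mu * (2 * x - 1) < 1.

(* Gam solves DCP_lambda for X (layers 1..K): Gam_0 = X, Gam_{i-1} = D_i Gam_i,
   ||Gam_i||^s_{0,infty} <= lambda_i. Layer i has m i channels and uses
   filters of spatial length n (i-1). *)
Definition DCP (R : realDomainType) (N K : nat) (m n : nat -> nat)
  (D : forall i : nat, 'M[R]_(N * m i.-1, N * m i)) (lam : nat -> R)
  (X : 'cV[R]_(N * m 0%N)) (Gam : forall i : nat, 'cV[R]_(N * m i)) : Prop :=
  Gam 0%N = X /\
  forall i : nat, (1 <= i <= K)%N ->
    Gam i.-1 = D i *m Gam i /\ (stripe_norm (n i.-1) (Gam i))%:R <= lam i.

(* A difference [d] of two admissible representations of one layer lies in the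
   kernel of the convolutional dictionary [D].  At a largest entry [c] of [d],
   row [c] of [D^T D d = 0] (unit diagonal, off-diagonal entries at most [mu])
   gives [1 <= mu * s], where [s] counts the other nonzero entries of [d] whose
   atoms overlap atom [c]; these all lie in one stripe, so
   [||d||^s_{0,oo} >= 1 + 1/mu].  But [||d||^s_{0,oo}] is at most
   [||Gam||^s_{0,oo} + ||Gam'||^s_{0,oo} < 1 + 1/mu].  Uniqueness then
   propagates layer by layer from [Gam_0 = X]. *)

From HB Require Import structures.
From mathcomp Require Import all_boot all_order all_algebra.
From mathcomp Require Import zify lra.
Set Implicit Arguments. Unset Strict Implicit. Unset Printing Implicit Defensive.
Import Order.TTheory GRing.Theory Num.Theory.
Local Open Scope ring_scope.

Lemma cyclic_offset_split (N mp p k : nat) :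
  (0 < mp)%N -> (p < N * mp)%N -> (k <= N)%N ->
  ((p + N * mp - k * mp) %% (N * mp) = ((p %/ mp + N - k) %% N) * mp + p %% mp)%N.
Proof.
move=> mp0 pN kN.
have hp := divn_eq p mp.
set q := (p %/ mp)%N in hp *; set r := (p %% mp)%N in hp *.
have rlt : (r < mp)%N by rewrite ltn_mod.
have kmp : (k * mp <= N * mp)%N by rewrite leq_mul2r kN orbT.
have -> : (p + N * mp - k * mp = (q + N - k) * mp + r)%N.
  by rewrite hp mulnBl mulnDl; move: kmp; clearbody q r; lia.
have N0 : (0 < N)%N by case: (N) pN; rewrite ?mul0n.
set x := (q + N - k)%N.
rewrite {1}(divn_eq x N) mulnDl -addnA -mulnA modnMDl modn_small //.
apply: (@leq_trans ((x %% N).+1 * mp)); first by rewrite mulSn; lia.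
by rewrite leq_mul2r ltn_pmod // orbT.
Qed.

Lemma convdict_neq0_offset (R : nzRingType) N mp mi np (f : nat -> nat -> R)
    (p : 'I_(N * mp)) (c : 'I_(N * mi)) :
  convdict N mp mi np f p c != 0 -> ((p %/ mp + N - c %/ mi) %% N < np)%N.
Proof.
rewrite mxE /=; case: ifP => [offset_lt _|]; last by rewrite eqxx.
have /andP[_ mp0] : (0 < N)%N && (0 < mp)%N.
  by rewrite -muln_gt0; apply: leq_ltn_trans (ltn_ord p).
have /andP[_ mi0] : (0 < N)%N && (0 < mi)%N.
  by rewrite -muln_gt0; apply: leq_ltn_trans (ltn_ord c).
have kN : (c %/ mi <= N)%N by rewrite ltnW // ltn_divLR.
rewrite cyclic_offset_split // in offset_lt.
rewrite -(ltn_pmul2r mp0); apply: leq_ltn_trans offset_lt; exact: leq_addr.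
Qed.

(* Shifts [k], [k'] at cyclic offsets [u], [u'] from the same block [q] satisfy
   [k' = k + u - u'] (mod [N]). *)
Lemma shift_from_offsets (N q k k' : nat) : (k <= N)%N -> (k' < N)%N ->
  k' = ((k + (q + N - k) %% N + (N - (q + N - k') %% N)) %% N)%N.
Proof.
move=> kN k'N; have N0 : (0 < N)%N by case: (N) k'N.
apply/eqP; rewrite -{1}(modn_small k'N) -(eqn_modDr ((q + N - k') %% N)).
have u'lt : ((q + N - k') %% N < N)%N by rewrite ltn_pmod.
have -> : (k + (q + N - k) %% N + (N - (q + N - k') %% N) + (q + N - k') %% N
          = k + (q + N - k) %% N + N)%N.
  by move: u'lt; move: ((q + N - k') %% N)%N ((q + N - k) %% N)%N => a b; lia.
rewrite modnDr modnDmr modnDmr.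
have -> : (k' + (q + N - k') = q + N)%N by lia.
by have -> : (k + (q + N - k) = q + N)%N by lia.
Qed.

Definition in_stripe (N mi np k c : nat) : bool :=
  [exists t : 'I_(2 * np).-1, (c %/ mi == (k + t + N + 1 - np) %% N)%N].

Lemma convdict_overlap (R : nzRingType) N mp mi np (f : nat -> nat -> R)
    (p : 'I_(N * mp)) (c c' : 'I_(N * mi)) :
  convdict N mp mi np f p c != 0 -> convdict N mp mi np f p c' != 0 ->
  in_stripe N mi np (c %/ mi) c'.
Proof.
move=> /convdict_neq0_offset u_lt /convdict_neq0_offset u'_lt.
have /andP[N0 mi0] : (0 < N)%N && (0 < mi)%N.
  by rewrite -muln_gt0; apply: leq_ltn_trans (ltn_ord c).
have kN : (c %/ mi < N)%N by rewrite ltn_divLR.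
have k'N : (c' %/ mi < N)%N by rewrite ltn_divLR.
have := @shift_from_offsets N (p %/ mp) _ _ (ltnW kN) k'N.
have u'N : ((p %/ mp + N - c' %/ mi) %% N < N)%N by rewrite ltn_pmod.
move: u_lt u'_lt u'N.
move: ((p %/ mp + N - c %/ mi) %% N)%N ((p %/ mp + N - c' %/ mi) %% N)%N => u u'.
move=> u_lt u'_lt u'N k'E.
have t_lt : (u + (np.-1 - u') < (2 * np).-1)%N by clear -u_lt u'_lt; lia.
apply/existsP; exists (Ordinal t_lt); rewrite k'E; apply/eqP; congr (_ %% _)%N.
by rewrite /=; move: (c %/ mi)%N => k; clear -u_lt u'_lt u'N; lia.
Qed.

Lemma convdict_gram_eq0 (R : nzRingType) N mp mi np (f : nat -> nat -> R)
    (c c' : 'I_(N * mi)) :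
  ~~ in_stripe N mi np (c %/ mi) c' ->
  ((convdict N mp mi np f)^T *m convdict N mp mi np f) c c' = 0.
Proof.
move=> notin; rewrite mxE big1 // => p _; rewrite mxE.
have [->|Dc] := eqVneq (convdict N mp mi np f p c) 0; first by rewrite mul0r.
have [->|Dc'] := eqVneq (convdict N mp mi np f p c') 0; first by rewrite mulr0.
by rewrite (convdict_overlap Dc Dc') in notin.
Qed.

Lemma le_coherence (R : realDomainType) a b (D : 'M[R]_(a, b)) (i j : 'I_b) :
  j != i -> `|\sum_(p < a) D p i * D p j| <= coherence D.
Proof.
move=> ji; apply: le_trans (le_bigmax _ _ i).
exact: (le_bigmax_cond 0 (P := fun j => j != i)
  (fun j => `|\sum_(p < a) D p i * D p j|) ji).
Qed.

Lemma coherence_ge0 (R : realDomainType) a b (D : 'M[R]_(a, b)) : 0 <= coherence D.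
Proof. exact: bigmax_ge_id. Qed.

Lemma unit_atoms_gram_diag (R : nzRingType) a b (D : 'M[R]_(a, b)) (c : 'I_b) :
  unit_atoms D -> (D^T *m D) c c = 1.
Proof.
by move/(_ c) <-; rewrite mxE; apply: eq_bigr => p _; rewrite mxE expr2.
Qed.

(* Gershgorin-type bound at a largest entry of a kernel vector. *)
Lemma kernel_coherence_bound (R : realFieldType) a b (D : 'M[R]_(a, b))
    (d : 'cV[R]_b) (cm : 'I_b) :
  unit_atoms D -> D *m d = 0 ->
  (forall c, `|d c 0| <= `|d cm 0|) -> d cm 0 != 0 ->
  1 <= coherence D *+
         #|[pred c | [&& c != cm, (D^T *m D) cm c != 0 & d c 0 != 0]]|.
Proof.
move=> unitD Dd0 dmax dcm; set G := D^T *m D.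
have Gd0 : \sum_c G cm c * d c 0 = 0.
  have := congr1 (fun M : 'cV[R]_b => M cm 0) (mulmxA D^T D d).
  by rewrite Dd0 mulmx0 !mxE.
have Gcm : G cm cm = 1 by exact: unit_atoms_gram_diag.
have dcmE : d cm 0 = - \sum_(c | c != cm) G cm c * d c 0.
  by rewrite (bigD1 cm) //= Gcm mul1r in Gd0; apply/eqP; rewrite -addr_eq0 Gd0.
have dcm_le : `|d cm 0| <= `|d cm 0| * coherence D *+
    #|[pred c | [&& c != cm, G cm c != 0 & d c 0 != 0]]|.
  rewrite -sumr_const {1}dcmE normrN; apply: le_trans (ler_norm_sum _ _ _) _.
  rewrite (bigID (fun c => (G cm c != 0) && (d c 0 != 0))) /=.
  rewrite [X in _ + X]big1 ?addr0 => [|c /andP[_]]; last first.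
    by rewrite negb_and !negbK => /orP[]/eqP->; rewrite ?mulr0 ?mul0r normr0.
  rewrite [leRHS](eq_bigl (fun c => (c != cm) && ((G cm c != 0) && (d c 0 != 0))))
    //.
  apply: ler_sum => c /andP[ccm _]; rewrite normrM mulrC.
  by apply: ler_pM => //; rewrite [G _ _]mxE; under eq_bigr do rewrite mxE;
    exact: le_coherence.
by rewrite -mulrnAr -[X in X <= _]mulr1 ler_pM2l ?normr_gt0 in dcm_le.
Qed.

Lemma card_in_stripe_le_l0 (R : nzRingType) N mi np (g : 'cV[R]_(N * mi)) k :
  (#|[pred c : 'I_(N * mi) | in_stripe N mi np k c && (g c ord0 != 0%R)]|
     <= stripe_l0 np g k)%N.
Proof.
rewrite -sum1_card big_mkcond /stripe_l0 /=.
under [X in (_ <= X)%N]eq_bigr => t _ do rewrite big_mkcond /=.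
rewrite exchange_big /=; apply: leq_sum => c _.
rewrite inE /=; case: (boolP (g c ord0 != 0%R)) => [gc|_]; last by rewrite andbF.
rewrite andbT /in_stripe; case: existsP => // [[t Pt]].
by rewrite (bigD1 t) //= Pt.
Qed.

Lemma stripe_l0_le_norm (R : nzRingType) N mi np (g : 'cV[R]_(N * mi)) (j : 'I_N) :
  (stripe_l0 np g j <= stripe_norm np g)%N.
Proof. exact: (@leq_bigmax _ (fun j : 'I_N => stripe_l0 np g j)). Qed.

Lemma stripe_normB (R : nzRingType) N mi np (g1 g2 : 'cV[R]_(N * mi)) :
  (stripe_norm np (g1 - g2) <= stripe_norm np g1 + stripe_norm np g2)%N.
Proof.
apply/bigmax_leqP => j _; apply: leq_trans (leq_add (stripe_l0_le_norm np g1 j)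
  (stripe_l0_le_norm np g2 j)).
rewrite /stripe_l0 -big_split /=; apply: leq_sum => t _.
rewrite -big_split /=; apply: leq_sum => c _; rewrite !mxE.
have [->|h1] := eqVneq (g1 c ord0) 0; have [->|h2] := eqVneq (g2 c ord0) 0;
  by rewrite ?subr0 ?sub0r ?oppr_eq0 ?eqxx ?h1 ?h2 //; case: (_ != _).
Qed.

(* Stripe form of the spark bound: [||d||^s_{0,oo} >= 1 + 1/mu] on the kernel. *)
Lemma convdict_kernel_stripe_norm (R : realFieldType) N mp mi np
    (f : nat -> nat -> R) (d : 'cV[R]_(N * mi)) :
  let D := convdict N mp mi np f in
  unit_atoms D -> D *m d = 0 -> d != 0 ->
  1 <= coherence D * ((stripe_norm np d)%:R - 1).
Proof.
move=> D unitD Dd0 /eqP d_neq0.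
have [c1 dc1] : exists c1, d c1 0 != 0.
  apply/existsP; apply: contra_notT d_neq0; rewrite negb_exists => /forallP d0.
  by apply/colP => c; rewrite mxE; apply/eqP; rewrite -[_ == _]negbK d0.
pose cm := Order.arg_max c1 xpredT (fun c => `|d c 0|).
have dmax : forall c, `|d c 0| <= `|d cm 0|.
  by move=> c; rewrite /cm; case: arg_maxP => // i _; apply.
have dcm : d cm 0 != 0.
  by rewrite -normr_gt0; apply: lt_le_trans (dmax c1); rewrite normr_gt0.
have k_lt : (cm %/ mi < N)%N.
  have /andP[_ mi0] : (0 < N)%N && (0 < mi)%N.
    by rewrite -muln_gt0; apply: leq_ltn_trans (ltn_ord cm).
  by rewrite ltn_divLR.
set S := [pred c | [&& c != cm, (D^T *m D) cm c != 0 & d c 0 != 0]].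
set T := [pred c : 'I_(N * mi) | in_stripe N mi np (cm %/ mi) c && (d c 0 != 0)].
have in_T c : (D^T *m D) cm c != 0 -> d c 0 != 0 -> c \in T.
  move=> Gc dc; rewrite inE dc andbT; apply: contraR Gc => notin.
  by apply/eqP; apply: convdict_gram_eq0.
have cmT : cm \in T by rewrite in_T // unit_atoms_gram_diag ?oner_eq0.
have card_S : (#|S|.+1 <= stripe_norm np d)%N.
  apply: leq_trans (stripe_l0_le_norm np d (Ordinal k_lt)).
  apply: leq_trans (card_in_stripe_le_l0 _ _ _); change (#|S| < #|T|)%N.
  rewrite [X in (_ < X)%N](cardD1 cm) cmT ltnS.
  apply/subset_leq_card/subsetP => c /and3P[ccm Gc dc].
  by rewrite inE ccm in_T.
have := kernel_coherence_bound unitD Dd0 dmax dcm; rewrite -/S => one.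
apply: le_trans one _; rewrite -[leLHS]mulr_natr.
apply: ler_wpM2l; first exact: coherence_ge0.
by rewrite lerBrDr natr1 ler_nat.
Qed.

Lemma below_coh_bound_le (R : realDomainType) (mu x y : R) :
  0 <= mu -> x <= y -> below_coh_bound mu y -> below_coh_bound mu x.
Proof.
move=> mu0 xy; apply: le_lt_trans; apply: ler_wpM2l => //; lra.
Qed.

Lemma convdict_stripe_unique (R : realFieldType) N mp mi np (f : nat -> nat -> R)
    (g1 g2 : 'cV[R]_(N * mi)) :
  let D := convdict N mp mi np f in
  unit_atoms D -> D *m g1 = D *m g2 ->
  below_coh_bound (coherence D) (stripe_norm np g1)%:R ->
  below_coh_bound (coherence D) (stripe_norm np g2)%:R ->
  g1 = g2.
Proof.
move=> D unitD Dg12 b1 b2; apply/eqP; rewrite -subr_eq0; apply/negPn/negP => d_neq0.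
have Dd0 : D *m (g1 - g2) = 0 by rewrite mulmxBr Dg12 subrr.
have one := convdict_kernel_stripe_norm unitD Dd0 d_neq0.
have := stripe_normB np g1 g2; rewrite -(ler_nat R) natrD => norm_le.
have mu0 := coherence_ge0 D; move: b1 b2 one; rewrite /below_coh_bound.
move: (coherence D) (stripe_norm np g1)%:R (stripe_norm np g2)%:R
  (stripe_norm np (g1 - g2))%:R mu0 norm_le => mu a b s mu0 norm_le b1 b2 one.
have : mu * (s - 1) <= mu * (a + b - 1) by apply: ler_wpM2l => //; lra.
nra.
Qed.

Theorem theorem1 (R : realFieldType) (N K : nat) (m n : nat -> nat)
  (filt : nat -> nat -> nat -> R)
  (D : forall i : nat, 'M[R]_(N * m i.-1, N * m i))
  (lam : nat -> R) (X : 'cV[R]_(N * m 0%N))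
  (Gam : forall i : nat, 'cV[R]_(N * m i)) :
  (0 < N)%N ->
  m 0%N = 1%N ->
  (forall i : nat, (1 <= i <= K)%N -> (0 < n i.-1 <= N)%N) ->
  (forall i : nat, (1 <= i <= K)%N ->
     D i = convdict N (m i.-1) (m i) (n i.-1) (filt i) /\ unit_atoms (D i)) ->
  Gam 0%N = X ->
  (forall i : nat, (1 <= i <= K)%N -> Gam i.-1 = D i *m Gam i) ->
  (forall i : nat, (1 <= i <= K)%N ->
     below_coh_bound (coherence (D i)) (stripe_norm (n i.-1) (Gam i))%:R) ->
  (forall i : nat, (1 <= i <= K)%N ->
     (stripe_norm (n i.-1) (Gam i))%:R <= lam i /\
     below_coh_bound (coherence (D i)) (lam i)) ->
  @DCP R N K m n D lam X Gam /\
  (forall Gam' : forall i : nat, 'cV[R]_(N * m i),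
     @DCP R N K m n D lam X Gam' ->
     forall i : nat, (1 <= i <= K)%N -> Gam' i = Gam i).
Proof.
move=> _ _ _ hD hG0 hG hcoh hlam.
split=> [|Gam' [h0' h'] i /andP[_ iK]].
  by split=> // i hi; split; [exact: hG | exact: (hlam i hi).1].
elim: i iK => [|i IH] iK; first by rewrite h0' hG0.
have hi : (1 <= i.+1 <= K)%N by rewrite iK.
have [Gam'E Gam'_le] := h' _ hi; have [DE unitD] := hD _ hi.
have [_ lam_bound] := hlam _ hi.
have Gam'_bound := below_coh_bound_le (coherence_ge0 _) Gam'_le lam_bound.
move: unitD (hcoh _ hi) Gam'_bound (hG _ hi) Gam'E; rewrite DE /= => unitD b b' E E'.
by apply: (convdict_stripe_unique unitD _ b' b); rewrite -[LHS]E' -[RHS]E IH // ltnW.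
Qed.
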